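(* Let $G=(V,E)$ with weight $\mu$ be an infinite, connected, locally finite weighted graph satisfying condition $(p_0)$, let $m>1$, and fix $o\in V$. Let $(p,q)\in G_4=\{(p,q): p<0,\ q=m-1\}$. Suppose there exist constants $\alpha>0$, $C>0$ and $n_1$ such that $$W_o(n)\le C\, n^{\alpha}\quad\text{for all } n\ge n_1.$$ Then the inequality $\Delta_m u+u^p|\nabla u|^q\le 0$ on $V$ admits no nontrivial positive solution.
   Context: Setting: $G=(V,E)$ is an infinite, connected, locally finite graph with no loops and no multiple edges; $x\sim y$ means $x$ and $y$ are joined by an edge. A weight is a symmetric function $\mu:V\times V\to[0,\infty)$ with $\mu_{xy}=\mu_{yx}>0$ if and only if $x\sim y$; the vertex measure is $\mu(x)=\sum_{y\sim x}\mu_{xy}$. For $m>1$ and $u:V\to\mathbb R$, $\Delta_m u(x)=\frac{1}{\mu(x)}\sum_{y\sim x}\mu_{xy}|u(y)-u(x)|^{m-2}(u(y)-u(x))$ and $|\nabla u(x)|=\big(\sum_{y\sim x}\frac{\mu_{xy}}{2\mu(x)}(u(y)-u(x))^2\big)^{1/2}$. Condition $(p_0)$: there is a constant $p_0>1$ such that $\mu_{xy}/\mu(x)\ge 1/p_0$ for all $x\sim y$. $d(x,y)$ is the graph (shortest path) distance, $B(o,n)=\{x\in V: d(o,x)\le n\}$, and $W_o(n)=\sum_{x\in B(o,n),\,y\in V,\,d(o,x)<d(o,y)}\mu_{xy}$. A nontrivial positive solution of $\Delta_m u+u^p|\nabla u|^q\le 0$ is a non-constant function $u:V\to(0,\infty)$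 such that $\Delta_m u(x)+u(x)^p|\nabla u(x)|^q\le 0$ for every $x\in V$, with the conventions $0^0=1$, $0^q=0$ for $q>0$, and, for $q<0$, $|\nabla u(x)|^q=+\infty$ when $|\nabla u(x)|=0$ (so the inequality fails at such $x$). *)

From HB Require Import structures.
From mathcomp Require Import all_boot all_order all_algebra.
From mathcomp Require Import all_classical all_reals all_analysis.
Set Implicit Arguments. Unset Strict Implicit. Unset Printing Implicit Defensive.
Import Order.TTheory GRing.Theory Num.Theory.
Local Open Scope classical_set_scope.
Local Open Scope ring_scope.

(* A locally finite simple graph on V is given by its (finite) neighbour lists:
   y \in nb x  <->  x ~ y. *)
Definition simple_graph (V : eqType) (nb : V -> seq V) : Prop :=
  (forall x, uniq (nb x)) /\
  (forall x, x \notin nb x) /\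
  (forall x y, (y \in nb x) = (x \in nb y)).

Fixpoint walk (V : eqType) (nb : V -> seq V) (n : nat) (x y : V) : Prop :=
  match n with
  | 0%N => x = y
  | n'.+1 => exists2 z, z \in nb x & walk nb n' z y
  end.

Definition connected_graph (V : eqType) (nb : V -> seq V) : Prop :=
  forall x y, exists n, walk nb n x y.

Definition infinite_graph (V : eqType) : Prop := ~ finite_set [set: V].

Definition gdist (V : eqType) (nb : V -> seq V) (x y : V) : nat :=
  match pselect (exists n, `[< walk nb n x y >]) with
  | left H => ex_minn H
  | right _ => 0%N
  end.

Section Weighted.
Variables (R : realType) (V : choiceType) (nb : V -> seq V) (mu : V -> V -> R).

Definition is_weight : Prop :=
  (forall x y, mu x y = mu y x) /\
  (forall x y, (0 < mu x y) <-> (y \in nb x)) /\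
  (forall x y, 0 <= mu x y).

Definition vmeas (x : V) : R := \sum_(y <- nb x) mu x y.

Definition cond_p0 : Prop :=
  exists p0 : R, 1 < p0 /\ forall x y, y \in nb x -> p0^-1 <= mu x y / vmeas x.

Definition mlap (m : R) (u : V -> R) (x : V) : R :=
  (vmeas x)^-1 * \sum_(y <- nb x) mu x y * (`|u y - u x| `^ (m - 2) * (u y - u x)).

Definition gradn (u : V -> R) (x : V) : R :=
  Num.sqrt (\sum_(y <- nb x) mu x y / (2 * vmeas x) * (u y - u x) ^+ 2).

Definition ball (o : V) (n : nat) : set V := [set x | (gdist nb o x <= n)%N].

Definition Wo (o : V) (n : nat) : R :=
  \sum_(x \in ball o n)
     \sum_(y <- nb x | (gdist nb o x < gdist nb o y)%N) mu x y.

Definition nontriv_pos_sol (m p q : R) (u : V -> R) : Prop :=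
  (forall x, 0 < u x) /\ (exists x y, u x != u y) /\
  (forall x, mlap m u x + u x `^ p * gradn u x `^ q <= 0).
End Weighted.

From Pilot Require Import Defs.
From HB Require Import structures.
From mathcomp Require Import all_boot all_order all_algebra.
From mathcomp Require Import all_classical all_reals all_analysis.
From mathcomp Require Import ring lra.
Import Order.TTheory GRing.Theory Num.Theory.
Local Open Scope ring_scope.

(* Suppose u is a nonconstant positive solution, pick an edge x ~ y with
   u y <> u x and a level T = u b > u x, and truncate: w = min u T.  Then
   -vmeas * Δ_m w >= 0 everywhere, and where u <= T, w touches u from below,
   so -vmeas * Δ_m w >= vmeas u^p |∇u|^(m-1), which is at least
   T^p vmeas |∇u|^(m-1) where u < T because p < 0.
   Summed over the ball B(o,n), these quantities add up to the flux D(n) of w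
   through the edges leaving the ball.  An edge leaving the ball carries
   positive flux only into a vertex z with u z < T, and then by (p0) at most a
   constant times |∇u(z)|^(m-1); hence D(n) <= K (D(n+1) - D(n)), and D grows
   geometrically from D(d(o,x)) > 0.  On the other hand each such edge
   carries at most T^(m-1) mu, so D(n) <= T^(m-1) W_o(n), which grows only
   polynomially. *)

Section SeqSums.
Context {M : nmodType} {T : eqType}.

Lemma sum_filter_swap {s t : seq T} {f : T -> M} : uniq s -> uniq t ->
  \sum_(x <- s | x \in t) f x = \sum_(x <- t | x \in s) f x.
Proof.
move=> us ut; rewrite -[LHS]big_filter -[RHS]big_filter; apply: perm_big.
by apply: uniq_perm; rewrite ?filter_uniq // => x; rewrite !mem_filter andbC.
Qed.

Lemma sum_in_superset {s t : seq T} {P : pred T} {f : T -> M} :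
  uniq s -> uniq t -> {in s, forall x, P x -> x \in t} ->
  \sum_(x <- s | P x) f x = \sum_(x <- t | (x \in s) && P x) f x.
Proof.
move=> us ut st; rewrite -[LHS]big_filter -[RHS]big_filter; apply: perm_big.
apply: uniq_perm; rewrite ?filter_uniq // => x; rewrite !mem_filter.
by apply/andP/andP => [[Px xs]|[/andP [] //]]; split; rewrite ?Px ?xs ?st.
Qed.

End SeqSums.

Section SignedPower.
Context {R : realType}.

Lemma le0_ger_powR (r a b : R) : r <= 0 -> 0 < a -> a <= b -> b `^ r <= a `^ r.
Proof.
move=> r_le0 a_gt0 ab; have b_gt0 := lt_le_trans a_gt0 ab.
have powR_inv x : x `^ r = (x `^ (- r))^-1 by rewrite -powRN opprK.
rewrite !powR_inv lef_pV2 ?posrE ?powR_gt0 //.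
by apply: ge0_ler_powR; rewrite ?oppr_ge0 ?nnegrE ?(ltW a_gt0) ?(ltW b_gt0).
Qed.

Definition spow (m d : R) := `|d| `^ (m - 2) * d.

Context {m : R} (m_gt1 : 1 < m).

Lemma spowN d : spow m (- d) = - spow m d.
Proof. by rewrite /spow normrN mulrN. Qed.

Lemma spow_nneg {d} : 0 <= d -> spow m d = d `^ (m - 1).
Proof.
rewrite le_eqVlt => /orP [/eqP <-|d_gt0].
  by rewrite /spow mulr0 powR0 // subr_eq0 gt_eqF.
rewrite /spow ger0_norm ?ltW // mulrC.
have -> : m - 2 = (m - 1) - 1 by ring.
by rewrite mulr_powRB1 ?ltW ?subr_gt0.
Qed.

Lemma spow_ge0 d : 0 <= d -> 0 <= spow m d.
Proof. by move=> d_ge0; rewrite spow_nneg ?powR_ge0. Qed.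

Lemma ler_spow : {homo spow m : a b / a <= b}.
Proof.
have m1_ge0 : 0 <= m - 1 by rewrite subr_ge0 ltW.
have homo_nneg a b : 0 <= a -> a <= b -> spow m a <= spow m b.
  move=> a_ge0 ab; rewrite !spow_nneg ?(le_trans a_ge0 ab) //.
  by apply: ge0_ler_powR; rewrite ?nnegrE ?(le_trans a_ge0 ab).
move=> a b ab; have [a_ge0|a_lt0] := lerP 0 a; first exact: homo_nneg.
have [b_ge0|b_lt0] := lerP 0 b.
  apply: (@le_trans _ _ 0); last exact: spow_ge0.
  by rewrite -[a]opprK spowN oppr_le0 spow_ge0 // oppr_ge0 ltW.
have := homo_nneg (- b) (- a); rewrite !spowN lerN2 oppr_ge0 lerN2.
by apply=> //; apply: ltW.
Qed.

Lemma spow_le0 d : d <= 0 -> spow m d <= 0.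
Proof. by move=> /ler_spow; rewrite /spow mulr0. Qed.

End SignedPower.

Section Growth.
Context {R : realType}.

Lemma ln_le_linear (e x : R) : 0 < e -> 0 < x -> ln x <= e * x - 1 - ln e.
Proof.
move=> e_gt0 x_gt0; have ex_gt : -1 < e * x - 1 by rewrite ltrBrDr addNr mulr_gt0.
by have := le_ln1Dx ex_gt; rewrite [1 + _]addrC subrK lnM ?posrE //; lra.
Qed.

Lemma geometric_lower_bound {a : nat -> R} {K : R} : 0 < K ->
  (forall n, a n <= K * (a n.+1 - a n)) ->
  forall N k, a N * (1 + K^-1) ^+ k <= a (N + k)%N.
Proof.
move=> K_gt0 step N; elim=> [|k IHk]; first by rewrite expr0 mulr1 addn0.
have stepK : a (N + k)%N * (1 + K^-1) <= a (N + k)%N.+1.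
  rewrite -(ler_pM2l K_gt0).
  have -> : K * (a (N + k)%N * (1 + K^-1)) = K * a (N + k)%N + a (N + k)%N.
    by field; rewrite gt_eqF.
  by have := step (N + k)%N; rewrite mulrBr; lra.
rewrite exprSr mulrA addnS; apply: le_trans stepK.
by rewrite ler_wpM2r // addr_ge0 // invr_ge0 ltW.
Qed.

Lemma geometric_not_powR_bounded {r d M a : R} (N n1 : nat) :
  1 < r -> 0 < d -> 0 < M -> 0 < a ->
  ~ (forall k, (n1 <= k)%N -> d * r ^+ k <= M * (N + k)%N%:R `^ a).
Proof.
move=> r_gt1 d_gt0 M_gt0 a_gt0 bounded.
have r_gt0 : 0 < r := lt_trans ltr01 r_gt1.
pose L := ln r; have L_gt0 : 0 < L by apply: ln_gt0.
pose e := L / (2 * a); have e_gt0 : 0 < e by rewrite divr_gt0 ?mulr_gt0.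
pose Q := ln M - ln d + L / 2 * N%:R - a * (1 + ln e).
pose k := (n1 + Num.truncn (2 * Q / L)).+1.
have NK_gt0 : 0 < (N + k)%N%:R :> R by rewrite ltr0n addnS.
have k_large : Q < L / 2 * k%:R.
  have -> : Q = L / 2 * (2 * Q / L) by field; rewrite gt_eqF.
  rewrite ltr_pM2l ?divr_gt0 //; apply: lt_le_trans (truncnS_gt _) _.
  by rewrite ler_nat ltnS leq_addl.
have ln_bound : ln d + L * k%:R <= ln M + a * ln (N + k)%N%:R.
  have := bounded k (leq_trans (leq_addr _ _) (leqnSn _)).
  rewrite -ler_ln ?posrE ?mulr_gt0 ?exprn_gt0 ?powR_gt0 //.
  by rewrite !lnM ?posrE ?exprn_gt0 ?powR_gt0 // lnXn // ln_powR mulr_natr.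
have ln_NK : a * ln (N + k)%N%:R <= L / 2 * N%:R + L / 2 * k%:R - a * (1 + ln e).
  have -> : L / 2 * N%:R + L / 2 * k%:R - a * (1 + ln e) =
      a * (e * (N + k)%N%:R - 1 - ln e) by rewrite natrD /e; field; rewrite gt_eqF.
  by rewrite ler_wpM2l ?ln_le_linear // ltW.
have : L * k%:R = 2 * (L / 2 * k%:R) by field.
by move: k_large ln_bound ln_NK; rewrite /Q; lra.
Qed.

End Growth.

Section Graph.
Context {V : choiceType} {nb : V -> seq V}.
Hypothesis nb_connected : connected_graph nb.

Lemma walk_snoc k a x y : walk nb k a x -> y \in nb x -> walk nb k.+1 a y.
Proof.
elim: k a => [|k IHk] a /=; first by move=> -> yx; exists y.
by move=> [z za wz] yx; exists z => //; apply: IHk.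
Qed.

Lemma walk_unsnoc k a y : walk nb k.+1 a y -> exists2 x, walk nb k a x & y \in nb x.
Proof.
elim: k a => [|k IHk] a /=; first by move=> [z za <-]; exists a.
by move=> [z za /IHk [x wx yx]]; exists x => //; exists z.
Qed.

Lemma gdist_min o x k : walk nb k o x -> (gdist nb o x <= k)%N.
Proof.
move=> wk; rewrite /gdist; case: pselect => [H|[]]; last by exists k; apply/asboolP.
by case: ex_minnP => n _; apply; apply/asboolP.
Qed.

Lemma gdist_walk o x : walk nb (gdist nb o x) o x.
Proof.
rewrite /gdist; case: pselect => [H|[]]; first by case: ex_minnP => n /asboolP.
by have [n wn] := nb_connected o x; exists n; apply/asboolP.
Qed.

Lemma gdist_nb o x y : y \in nb x -> (gdist nb o y <= (gdist nb o x).+1)%N.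
Proof. by move=> yx; apply: gdist_min; apply: walk_snoc (gdist_walk o x) yx. Qed.

Fixpoint ball_seq (o : V) (n : nat) : seq V :=
  if n is n'.+1 then
    undup (ball_seq o n' ++ flatten [seq nb x | x <- ball_seq o n'])
  else [:: o].

Lemma ball_seq_uniq o n : uniq (ball_seq o n).
Proof. by case: n => [|n] //=; apply: undup_uniq. Qed.

Lemma mem_ball_seq o n x : (x \in ball_seq o n) = (gdist nb o x <= n)%N.
Proof.
elim: n x => [|n IHn] x /=.
  rewrite inE leqn0; apply/eqP/eqP => [->|d0].
    by apply/eqP; rewrite -leqn0 gdist_min.
  by have := gdist_walk o x; rewrite d0.
rewrite mem_undup mem_cat IHn; apply/orP/idP => [[/leqW //|/flatten_mapP [z]]|].
  by rewrite IHn => dz /(gdist_nb o) dx; apply: leq_trans dx _.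
rewrite leq_eqVlt => /orP [/eqP dx|]; last by left.
right; have := gdist_walk o x; rewrite dx => /walk_unsnoc [z wz xz].
by apply/flatten_mapP; exists z; rewrite // IHn gdist_min.
Qed.

Lemma ball_seq_nb o n x y :
  x \in ball_seq o n -> y \in nb x -> y \in ball_seq o n.+1.
Proof. by rewrite !mem_ball_seq => dx /(gdist_nb o) dy; apply: leq_trans dy _. Qed.

Lemma walk_value_change (R : realDomainType) (u : V -> R) k a b :
  walk nb k a b -> u a < u b ->
  exists x y, [/\ y \in nb x, u y != u x & u x < u b].
Proof.
elim: k a => [|k IHk] a /=; first by move=> ->; rewrite ltxx.
move=> [z za wz] ab; have [uza|] := eqVneq (u z) (u a).
  by apply: (IHk z wz); rewrite uza.
by exists a, z.
Qed.

Lemma nonconstant_edge {R : realDomainType} {u : V -> R} :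
  (exists a b, u a != u b) ->
  exists b x y, [/\ y \in nb x, u y != u x & u x < u b].
Proof.
move=> [a [b]]; rewrite neq_lt => /orP [] ab.
  by have [k /walk_value_change/(_ ab)] := nb_connected a b; exists b.
by have [k /walk_value_change/(_ ab)] := nb_connected b a; exists a.
Qed.

Section Weighted.
Context {R : realType} {mu : V -> V -> R}.
Hypotheses (nb_simple : simple_graph nb) (mu_weight : is_weight nb mu).

Local Notation vm := (vmeas nb mu).

Lemma nb_sym x y : (y \in nb x) = (x \in nb y).
Proof. by case: nb_simple => _ []. Qed.

Lemma nb_uniq x : uniq (nb x).
Proof. by case: nb_simple. Qed.

Lemma mu_sym x y : mu x y = mu y x.
Proof. by case: mu_weight. Qed.

Lemma mu_ge0 x y : 0 <= mu x y.
Proof. by case: mu_weight => _ []. Qed.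

Lemma mu_gt0 {x y} : y \in nb x -> 0 < mu x y.
Proof. by case: mu_weight => _ [/(_ x y) []]. Qed.

Lemma vmeas_ge0 x : 0 <= vm x.
Proof. by apply: sumr_ge0 => y _; apply: mu_ge0. Qed.

Lemma vmeas_ge_mu {x y} : y \in nb x -> mu x y <= vm x.
Proof.
move=> yx; rewrite /vmeas (bigD1_seq y yx (nb_uniq x)) /= lerDl.
by apply: sumr_ge0 => z _; apply: mu_ge0.
Qed.

Lemma vmeas_gt0 {x y} : y \in nb x -> 0 < vm x.
Proof. by move=> yx; apply: lt_le_trans (mu_gt0 yx) (vmeas_ge_mu yx). Qed.

Lemma vmeas_mlap m u x :
  vm x * mlap nb mu m u x = \sum_(y <- nb x) mu x y * spow m (u y - u x).
Proof.
rewrite /mlap; have [vm0|vm_neq0] := eqVneq (vm x) 0; last by rewrite mulrA mulfV ?mul1r.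
rewrite vm0 mul0r big_seq big1 // => y yx.
by have := vmeas_gt0 yx; rewrite vm0 ltxx.
Qed.

Lemma exchange_nb_sum {A B : seq V} {P : pred V} {F : V -> V -> R} :
  uniq A -> uniq B -> {in A, forall x, {in nb x, forall y, P y -> y \in B}} ->
  \sum_(x <- A) \sum_(y <- nb x | P y) F x y =
  \sum_(y <- B | P y) \sum_(x <- nb y | x \in A) F x y.
Proof.
move=> uA uB AB.
transitivity (\sum_(x <- A) \sum_(y <- B) if (y \in nb x) && P y then F x y else 0).
  apply: eq_big_seq => x xA.
  by rewrite (sum_in_superset (nb_uniq x) uB (AB x xA)) big_mkcond.
rewrite exchange_big [RHS]big_mkcond; apply: eq_bigr => y _ /=.
case: (P y); last by rewrite big1 // => x _; rewrite andbF.
under eq_bigr do rewrite andbT.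
rewrite -big_mkcond /=; under eq_bigl do rewrite nb_sym.
exact: sum_filter_swap uA (nb_uniq y).
Qed.

Lemma sum_nb_antisym (A : seq V) (F : V -> V -> R) :
  uniq A -> (forall x y, F y x = - F x y) ->
  \sum_(x <- A) \sum_(y <- nb x) F x y =
  \sum_(x <- A) \sum_(y <- nb x | y \notin A) F x y.
Proof.
move=> uA Fanti; set I := \sum_(x <- A) \sum_(y <- nb x | y \in A) F x y.
have I0 : I = 0.
  suff : I = - I by lra.
  rewrite {1}/I (exchange_nb_sum uA uA); last by move=> x _ y _.
  rewrite /I [X in _ = - X]big_seq -sumrN.
  by apply: eq_bigr => y _; rewrite -sumrN; apply: eq_bigr => x _.
transitivity (I + \sum_(x <- A) \sum_(y <- nb x | y \notin A) F x y).
  by rewrite /I -big_split /=; apply: eq_bigr => x _; rewrite (bigID (mem A)).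
by rewrite I0 add0r.
Qed.

Lemma gradn_ge_edge (u : V -> R) {c : R} {x y : V} : 0 <= c -> x \in nb y ->
  c <= mu y x / vm y -> Num.sqrt (c / 2) * `|u x - u y| <= gradn nb mu u y.
Proof.
move=> c_ge0 xy c_le.
have term_ge0 z : 0 <= mu y z / (2 * vm y) * (u z - u y) ^+ 2.
  by rewrite mulr_ge0 ?sqr_ge0 ?divr_ge0 ?mulr_ge0 ?mu_ge0 ?vmeas_ge0.
rewrite -sqrtr_sqr -sqrtrM ?divr_ge0 // ler_sqrt ?sumr_ge0 //.
rewrite (bigD1_seq x xy (nb_uniq y)) /= -[leLHS]addr0 lerD ?sumr_ge0 //.
rewrite ler_wpM2r ?sqr_ge0 //.
have -> : mu y x / (2 * vm y) = mu y x / vm y / 2 by rewrite invfM; ring.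
by rewrite ler_wpM2r ?invr_ge0.
Qed.

Lemma Wo_ball_seq o n : Wo nb mu o n =
  \sum_(x <- ball_seq o n) \sum_(y <- nb x | (gdist nb o x < gdist nb o y)%N) mu x y.
Proof.
rewrite /Wo (fsbigE (ball_seq o n)); last 3 first.
- exact: ball_seq_uniq.
- by move=> x /= xB; rewrite /Defs.ball /= -mem_ball_seq.
- by move=> x /= xB; rewrite mem_ball_seq xB.
rewrite big_seq_cond [RHS]big_seq /=; apply: congr_big => // x.
by apply/andb_idr => xB; apply: mem_set; rewrite /Defs.ball /= -mem_ball_seq.
Qed.

Section Supersolution.
Context {m p p0 T : R} {u : V -> R} (o : V).
Hypotheses (m_gt1 : 1 < m) (p_lt0 : p < 0) (p0_gt0 : 0 < p0).
Hypothesis mu_p0 : forall x y, y \in nb x -> p0^-1 <= mu x y / vm x.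
Hypotheses (u_gt0 : forall x, 0 < u x) (T_gt0 : 0 < T).
Hypothesis u_super :
  forall x, mlap nb mu m u x + u x `^ p * gradn nb mu u x `^ (m - 1) <= 0.

Local Notation grad := (gradn nb mu u).
Local Notation B := (ball_seq o).

Definition utrunc x := Num.min (u x) T.

Lemma utrunc_le_u x : utrunc x <= u x.
Proof. by rewrite ge_min lexx. Qed.

Lemma utrunc_le_T x : utrunc x <= T.
Proof. by rewrite ge_min lexx orbT. Qed.

Lemma utrunc_gt0 x : 0 < utrunc x.
Proof. by rewrite lt_min u_gt0. Qed.

Lemma utrunc_id {x} : u x <= T -> utrunc x = u x.
Proof. exact: min_l. Qed.

(* [outflow x] is [- vmeas x * Δ_m w x] for the truncation [w = utrunc]. *)
Definition outflow x := \sum_(y <- nb x) mu x y * spow m (utrunc x - utrunc y).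

Lemma outflow_ge_super {x} :
  u x <= T -> vm x * (u x `^ p * grad x `^ (m - 1)) <= outflow x.
Proof.
move=> uxT.
have trunc_le : \sum_(y <- nb x) mu x y * spow m (utrunc y - utrunc x)
    <= vm x * mlap nb mu m u x.
  rewrite vmeas_mlap; apply: ler_sum => y _; rewrite ler_wpM2l ?mu_ge0 //.
  by apply: (ler_spow m_gt1); rewrite (utrunc_id uxT) lerD2r utrunc_le_u.
have -> : outflow x = - \sum_(y <- nb x) mu x y * spow m (utrunc y - utrunc x).
  by rewrite -sumrN; apply: eq_bigr => y _; rewrite -mulrN -spowN opprB.
rewrite lerNr; apply: le_trans trunc_le _.
by rewrite -mulrN ler_wpM2l ?vmeas_ge0 //; have := u_super x; lra.
Qed.

Lemma outflow_ge0 x : 0 <= outflow x.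
Proof.
have [uxT|Tux] := lerP (u x) T.
  apply: le_trans _ (outflow_ge_super uxT).
  by rewrite !mulr_ge0 ?vmeas_ge0 ?powR_ge0.
apply: sumr_ge0 => y _; rewrite mulr_ge0 ?mu_ge0 ?(spow_ge0 m_gt1) //.
by rewrite /utrunc (min_r (ltW Tux)) subr_ge0 utrunc_le_T.
Qed.

Definition edge_const := Num.sqrt (p0^-1 / 2).

Lemma edge_const_gt0 : 0 < edge_const.
Proof. by rewrite sqrtr_gt0 divr_gt0 ?invr_gt0. Qed.

Definition flux_cap y := if u y < T then (grad y / edge_const) `^ (m - 1) else 0.

Lemma flux_cap_ge0 y : 0 <= flux_cap y.
Proof. by rewrite /flux_cap; case: ifP => // _; apply: powR_ge0. Qed.

Lemma edge_flux_le_cap x y :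
  y \in nb x -> spow m (utrunc x - utrunc y) <= flux_cap y.
Proof.
move=> yx; rewrite /flux_cap; case: ifPn => [uyT|]; last first.
  rewrite -leNgt => Tuy; apply: (spow_le0 m_gt1).
  by rewrite /utrunc (min_r Tuy) subr_le0 utrunc_le_T.
rewrite -(spow_nneg m_gt1) ?divr_ge0 ?sqrtr_ge0 ?(ltW edge_const_gt0) //.
apply: (ler_spow m_gt1).
rewrite ler_pdivlMr ?edge_const_gt0 // mulrC (utrunc_id (ltW uyT)).
have xy : x \in nb y by rewrite -nb_sym.
have p0V_ge0 : 0 <= p0^-1 by rewrite invr_ge0 ltW.
apply: le_trans _ (gradn_ge_edge u p0V_ge0 xy (mu_p0 _ _ xy)).
rewrite ler_wpM2l ?(ltW edge_const_gt0) //; apply: le_trans _ (ler_norm _).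
by rewrite lerD2r utrunc_le_u.
Qed.

Definition growth_const := edge_const^-1 `^ (m - 1) / T `^ p.

Lemma growth_const_gt0 : 0 < growth_const.
Proof. by rewrite divr_gt0 ?powR_gt0 ?invr_gt0 ?edge_const_gt0. Qed.

Lemma flux_cap_le_outflow y : vm y * flux_cap y <= growth_const * outflow y.
Proof.
rewrite /flux_cap; case: ifPn => uyT; last first.
  by rewrite mulr0 mulr_ge0 ?outflow_ge0 ?(ltW growth_const_gt0).
apply: le_trans _ (ler_wpM2l (ltW growth_const_gt0) (outflow_ge_super (ltW uyT))).
rewrite powRM ?sqrtr_ge0 ?invr_ge0 ?(ltW edge_const_gt0) //.
have -> : growth_const * (vm y * (u y `^ p * grad y `^ (m - 1))) =
    vm y * (grad y `^ (m - 1) * edge_const^-1 `^ (m - 1)) * (u y `^ p / T `^ p).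
  by rewrite /growth_const; ring.
rewrite ler_peMr ?mulr_ge0 ?vmeas_ge0 ?powR_ge0 //.
by rewrite ler_pdivlMr ?powR_gt0 // mul1r le0_ger_powR ?(ltW p_lt0) ?(ltW uyT).
Qed.

Definition ball_outflow n := \sum_(x <- B n) outflow x.

Lemma ball_outflow_boundary n : ball_outflow n =
  \sum_(x <- B n) \sum_(y <- nb x | y \notin B n) mu x y * spow m (utrunc x - utrunc y).
Proof.
apply: sum_nb_antisym; first exact: ball_seq_uniq.
by move=> x y; rewrite mu_sym -mulrN -spowN opprB.
Qed.

Lemma ball_outflowS n :
  ball_outflow n.+1 = ball_outflow n + \sum_(y <- B n.+1 | y \notin B n) outflow y.
Proof.
rewrite /ball_outflow (bigID (mem (B n))); congr (_ + _).
rewrite (sum_filter_swap (ball_seq_uniq _ _) (ball_seq_uniq _ _)) big_seq_cond.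
rewrite [RHS]big_seq; apply: eq_bigl => y; apply/andb_idr.
by rewrite !mem_ball_seq; apply: leqW.
Qed.

Lemma ball_outflow_le_increment n :
  ball_outflow n <= growth_const * (ball_outflow n.+1 - ball_outflow n).
Proof.
rewrite ball_outflowS addrAC subrr add0r ball_outflow_boundary.
have to_cap : \sum_(x <- B n) \sum_(y <- nb x | y \notin B n)
      mu x y * spow m (utrunc x - utrunc y)
    <= \sum_(x <- B n) \sum_(y <- nb x | y \notin B n) mu x y * flux_cap y.
  apply: ler_sum => x _; rewrite big_seq_cond [leRHS]big_seq_cond.
  apply: ler_sum => y /andP [yx _].
  by rewrite ler_wpM2l ?mu_ge0 ?edge_flux_le_cap.
apply: le_trans to_cap _.
rewrite (exchange_nb_sum (ball_seq_uniq o n) (ball_seq_uniq o n.+1)); last first.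
  by move=> x xB y yx _; apply: ball_seq_nb xB yx.
rewrite mulr_sumr; apply: ler_sum => y _; apply: le_trans _ (flux_cap_le_outflow y).
rewrite -mulr_suml ler_wpM2r ?flux_cap_ge0 // /vmeas.
under eq_bigr do rewrite mu_sym.
by rewrite [leRHS](bigID (mem (B n))) /= lerDl sumr_ge0 // => x _; apply: mu_ge0.
Qed.

Lemma ball_outflow_le_Wo n : ball_outflow n <= T `^ (m - 1) * Wo nb mu o n.
Proof.
rewrite ball_outflow_boundary Wo_ball_seq mulr_sumr big_seq [leRHS]big_seq.
apply: ler_sum => x xB.
rewrite mulr_sumr big_mkcond [leRHS]big_mkcond /=; apply: ler_sum => y _.
have [yB|yB] /= := boolP (y \in B n).
  by case: ifP => // _; rewrite mulr_ge0 ?powR_ge0 ?mu_ge0.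
have -> : (gdist nb o x < gdist nb o y)%N.
  by move: xB yB; rewrite !mem_ball_seq -ltnNge; apply: leq_ltn_trans.
rewrite mulrC ler_wpM2r ?mu_ge0 // -(spow_nneg m_gt1 (ltW T_gt0)).
apply: (ler_spow m_gt1).
by have := utrunc_le_T x; have := utrunc_gt0 y; lra.
Qed.

Lemma ball_outflow_gt0 {x y} : u x <= T -> y \in nb x -> u y != u x ->
  0 < ball_outflow (gdist nb o x).
Proof.
move=> uxT yx uyx.
have grad_gt0 : 0 < grad x.
  have p0V_ge0 : 0 <= p0^-1 by rewrite invr_ge0 ltW.
  apply: lt_le_trans _ (gradn_ge_edge u p0V_ge0 yx (mu_p0 _ _ yx)).
  by rewrite mulr_gt0 -/edge_const ?edge_const_gt0 // normr_gt0 subr_eq0.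
have outflow_gt0 : 0 < outflow x.
  apply: lt_le_trans _ (outflow_ge_super uxT).
  by rewrite !mulr_gt0 ?powR_gt0 ?(vmeas_gt0 yx).
rewrite /ball_outflow (bigD1_seq x _ (ball_seq_uniq _ _)) ?mem_ball_seq //=.
by apply: lt_le_trans outflow_gt0 _; rewrite lerDl sumr_ge0 // => z _; apply: outflow_ge0.
Qed.

Lemma Wo_exp_growth {x y} : u x <= T -> y \in nb x -> u y != u x ->
  exists (r d : R) (N : nat),
    [/\ 1 < r, 0 < d & forall k, d * r ^+ k <= Wo nb mu o (N + k)%N].
Proof.
move=> uxT yx uyx; set N := gdist nb o x.
have Tm_gt0 : 0 < T `^ (m - 1) by apply: powR_gt0.
exists (1 + growth_const^-1), (ball_outflow N / T `^ (m - 1)), N; split.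
- by rewrite ltrDl invr_gt0 growth_const_gt0.
- by rewrite divr_gt0 ?(ball_outflow_gt0 uxT yx uyx).
move=> k; rewrite mulrAC ler_pdivrMr // [leRHS]mulrC.
apply: le_trans _ (ball_outflow_le_Wo _).
exact: geometric_lower_bound growth_const_gt0 ball_outflow_le_increment N k.
Qed.

End Supersolution.

End Weighted.
End Graph.

Theorem theorem1p1 (R : realType) (V : choiceType) (nb : V -> seq V)
  (mu : V -> V -> R) (m p q : R) (o : V) :
  simple_graph nb -> connected_graph nb -> infinite_graph V ->
  is_weight nb mu -> cond_p0 nb mu -> 1 < m ->
  p < 0 -> q = m - 1 ->
  (exists (alpha C : R) (n1 : nat), 0 < alpha /\ 0 < C /\
     forall n : nat, (n1 <= n)%N -> Wo nb mu o n <= C * n%:R `^ alpha) ->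
  ~ exists u : V -> R, nontriv_pos_sol nb mu m p q u.
Proof.
move=> nb_simple nb_connected _ mu_weight [p0 [p0_gt1 mu_p0]] m_gt1 p_lt0 ->.
move=> [alpha [C [n1 [alpha_gt0 [C_gt0 Wo_le]]]]] [u [u_gt0 [u_nonconst u_super]]].
have [b [x [y [yx uyx uxb]]]] := nonconstant_edge nb_connected u_nonconst.
have p0_gt0 : 0 < p0 := lt_trans ltr01 p0_gt1.
have [r [d [N [r_gt1 d_gt0 Wo_ge]]]] := Wo_exp_growth nb_connected nb_simple mu_weight o
  m_gt1 p_lt0 p0_gt0 mu_p0 u_gt0 (u_gt0 b) u_super (ltW uxb) yx uyx.
apply: (geometric_not_powR_bounded N n1 r_gt1 d_gt0 C_gt0 alpha_gt0) => k k_ge.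
by apply: le_trans (Wo_ge k) (Wo_le _ _); apply: leq_trans k_ge (leq_addl _ _).
Qed.
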